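(* Let $V$ be a finite-dimensional subspace of the space of differential $k$-forms on $T^n$, and let $W_d$ ($0\le d\le n$) be subspaces with $V_d=W_d\oplus V_{d+1}$. Then the geometric decomposition map $\mathcal D:V\to\bigoplus_{d=0}^n\bigoplus_{F\subseteq T^n,\ \dim F=d}\mathring V(F)$ is injective.
   Context: $T^n\subset\mathbb R^{n+1}$ is the standard simplex $\{\lambda_i\ge0,\ \sum\lambda_i=1\}$. For a face $F$, $V(F)=\mathrm{tr}_{T^n,F}(V)$ (pullback to $F$) and $\mathring V(F)$ is the subspace of $V(F)$ of forms whose trace on $\partial F$ vanishes. $V_d$ ($0\le d\le n+1$) is the subspace of $V$ of forms whose traces vanish on all $(d-1)$-dimensional faces of $T^n$ ($V_0=V$, $V_{n+1}=0$). $\mathcal D$ is the linear map defined on $W_d$ by $\alpha\mapsto\bigoplus_{\dim F=d}\mathrm{tr}_{T^n,F}\alpha$ and extended linearly to $V=W_0\oplus\dots\oplus W_n$ (the trace of $\alpha\in W_d$ on a $d$-face lies in $\mathring V(F)$). *)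

From HB Require Import structures.
From mathcomp Require Import all_boot all_order all_algebra.
From mathcomp Require Import boolp functions.
From mathcomp Require Import reals.
Unset Implicit Arguments. Unset Strict Implicit. Unset Printing Implicit Defensive.
Import Order.TTheory GRing.Theory Num.Theory.
Local Open Scope ring_scope.

Section Forms.
Variables (R : realType) (n k : nat).

Definition in_simplex (x : 'rV[R]_(n.+1)) : bool :=
  [forall i, 0 <= x 0 i] && (\sum_i x 0 i == 1).

Definition simplex_pt := {x : 'rV[R]_(n.+1) | in_simplex x}.

(* Strictly increasing maps 'I_k -> 'I_n: the multi-indices
   I = (i_1 < ... < i_k) of the basis k-forms dlambda_I,
   with coordinates lambda_1, ..., lambda_n on T^n. *)
Definition incr_idx :=
  {f : {ffun 'I_k -> 'I_n} | [forall i : 'I_k, forall j : 'I_k, (i < j)%N ==> (f i < f j)%N]}.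

(* A differential k-form on T^n: at each point x of T^n, the coefficient
   vector (omega_I(x))_I, meaning omega = sum_I omega_I dlambda_{i_1}/\.../\dlambda_{i_k},
   where lambda_1..lambda_n (lambda_0 = 1 - sum) are coordinates on T^n. *)
Definition kform := simplex_pt -> {ffun incr_idx -> R^o}.

(* Value of the form at x on tangent vectors v_1..v_k (tangent vectors of T^n
   are v with sum v_i = 0; dlambda_i(v) = v_i). *)
Definition eval_form (w : kform) (x : simplex_pt) (vs : k.-tuple 'rV[R]_(n.+1)) : R :=
  \sum_(I : incr_idx)
     w x I * \det (\matrix_(j < k, l < k) (tnth vs j) 0 (lift ord0 (val I l))).

(* Faces of T^n: nonempty vertex sets S; dim F = #|S| - 1. *)
Definition face_pt (S : {set 'I_(n.+1)}) :=
  {x : simplex_pt | [forall i, (i \notin S) ==> (val x 0 i == 0)]}.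

Definition tangent (S : {set 'I_(n.+1)}) (v : 'rV[R]_(n.+1)) : bool :=
  (\sum_i v 0 i == 0) && [forall i, (i \notin S) ==> (v 0 i == 0)].

Definition tangent_tuple (S : {set 'I_(n.+1)}) :=
  {vs : k.-tuple 'rV[R]_(n.+1) | all (tangent S) vs}.

Definition trace (S : {set 'I_(n.+1)}) (w : kform) :
  face_pt S -> tangent_tuple S -> R :=
  fun x vs => eval_form w (val x) (val vs).

Definition trace_vanishes (S : {set 'I_(n.+1)}) (w : kform) : Prop :=
  forall x vs, trace S w x vs = 0.

(* Linear span of a finite family of forms (finite-dimensional subspaces). *)
Definition in_span (s : seq kform) (w : kform) : Prop :=
  exists c : 'I_(size s) -> R, w = \sum_(i < size s) c i *: s`_i.

(* V_d: forms of V whose traces vanish on all (d-1)-dimensional faces,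
   i.e. faces with d vertices. *)
Definition Vsub (V : seq kform) (d : nat) (w : kform) : Prop :=
  in_span V w /\
  forall S : {set 'I_(n.+1)}, S != set0 -> #|S| = d -> trace_vanishes S w.

Definition decomp (W : nat -> seq kform) (alpha : kform) (a : 'I_(n.+1) -> kform) : Prop :=
  (forall d : 'I_(n.+1), in_span (W d) (a d)) /\ alpha = \sum_(d < n.+1) a d.

End Forms.

Arguments in_simplex {R n}.
Arguments eval_form {R n k}.
Arguments tangent {R n}.
Arguments trace {R n k}.
Arguments trace_vanishes {R n k}.
Arguments in_span {R n k}.
Arguments Vsub {R n k}.
Arguments decomp {R n k}.

(* Each difference a_d - b_d of corresponding components lies in W_d, hence
   in V_d, and its traces on the d-faces vanish, so it also lies in V_(d+1);
   as the sum V_d = W_d (+) V_(d+1) is direct, it is zero. *)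
From HB Require Import structures.
From mathcomp Require Import all_boot all_order all_algebra.
From mathcomp Require Import boolp functions.
From mathcomp Require Import reals.
Import Order.TTheory GRing.Theory Num.Theory.
Local Open Scope ring_scope.

Section Linearity.
Set Implicit Arguments.
Variables (R : realType) (n k : nat).
Implicit Types (s : seq (kform R n k)) (u v : kform R n k).

Lemma in_span0 s : in_span s 0.
Proof. by exists (fun _ => 0); rewrite big1 // => i _; rewrite scale0r. Qed.

Lemma in_spanB s u v : in_span s u -> in_span s v -> in_span s (u - v).
Proof.
move=> [cu ->] [cv ->]; exists (fun i => cu i - cv i).
by rewrite -sumrB; apply: eq_bigr => i _; rewrite scalerBl.
Qed.

Lemma trace0 S x vs : trace S (0 : kform R n k) x vs = 0.
Proof. by rewrite /trace /eval_form big1 // => I _; rewrite ffunE mul0r. Qed.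

Lemma traceB S u v x vs :
  trace S (u - v) x vs = trace S u x vs - trace S v x vs.
Proof.
by rewrite /trace /eval_form -sumrB; apply: eq_bigr => I _; rewrite !ffunE mulrBl.
Qed.

Lemma Vsub0 (V : seq (kform R n k)) d : Vsub V d 0.
Proof. by split=> [|S _ _ x vs]; [exact: in_span0 | exact: trace0]. Qed.

End Linearity.

Section DirectSummand.
Set Implicit Arguments.
Variables (R : realType) (n k d : nat) (V Wd : seq (kform R n k)).
Hypothesis VsubE : forall w, Vsub V d w <->
  exists a b, in_span Wd a /\ Vsub V d.+1 b /\ w = a + b.
Hypothesis span_Vsub_eq0 : forall w, in_span Wd w -> Vsub V d.+1 w -> w = 0.

Lemma span_Vsub w : in_span Wd w -> Vsub V d w.
Proof.
move=> Ww; apply/VsubE; exists w, 0.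
by rewrite addr0; split; [|split; [exact: Vsub0|]].
Qed.

Lemma trace_inj_span u v : in_span Wd u -> in_span Wd v ->
  (forall S : {set 'I_(n.+1)}, S != set0 -> #|S| = d.+1 -> trace S u = trace S v) ->
  u = v.
Proof.
move=> Wu Wv eq_trace; apply/eqP; rewrite -subr_eq0; apply/eqP.
have Wuv := in_spanB Wu Wv.
have [Vuv _] := span_Vsub Wuv.
apply: span_Vsub_eq0 => //; split=> // S S0 cardS x vs.
by rewrite traceB (eq_trace S S0 cardS) subrr.
Qed.

End DirectSummand.

Theorem proposition3p10 (R : realType) (n k : nat)
  (V : seq (kform R n k)) (W : nat -> seq (kform R n k))
  (hW : forall d : nat, (d <= n)%N ->
     (forall w, Vsub V d w <->
        exists a b, in_span (W d) a /\ Vsub V d.+1 b /\ w = a + b) /\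
     (forall w, in_span (W d) w -> Vsub V d.+1 w -> w = 0)) :
  forall (alpha beta : kform R n k) (a b : 'I_(n.+1) -> kform R n k),
    decomp W alpha a -> decomp W beta b ->
    (forall (d : 'I_(n.+1)) (S : {set 'I_(n.+1)}),
        S != set0 -> #|S| = d.+1 -> trace S (a d) = trace S (b d)) ->
    alpha = beta.
Proof.
move=> alpha beta a b [Wa ->] [Wb ->] eq_trace.
apply: eq_bigr => d _.
have [VsubE span_Vsub_eq0] := hW d (ltn_ord d).
exact: (trace_inj_span VsubE span_Vsub_eq0 (Wa d) (Wb d) (eq_trace d)).
Qed.
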